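(* Let $\Pi\subseteq\mathsf{pGCL}$ and $\Xi\subseteq\mathbb{E}$, and let $\mathfrak{C}$ be a verification condition provider. (1) If $\mathfrak{C}$ is demonically complete w.r.t. $(\Pi,\Xi)$ and $\mathrm{trans}^{\preceq}_{\mathrm{dwp}}$ preserves $\mathfrak{C}$, then for all $C\in\Pi$ and $f\in\Xi$ there exist invariant annotations for the loops of $C$ such that for all $C'\in\mathsf{pGCL}$: $C'\multimap\mathrm{trans}^{\preceq}_{\mathrm{dwp}}[\![C]\!](f)$ implies $\mathrm{dwp}[\![C]\!](f)=\mathrm{dwp}[\![C']\!](f)$. (2) If $\mathfrak{C}$ is angelically complete w.r.t. $(\Pi,\Xi)$ and $\mathrm{trans}^{\succeq}_{\mathrm{awp}}$ preserves $\mathfrak{C}$, then for every $C\in\Pi$ and $f\in\Xi$ there exist invariant annotations for $C$ such that for all $C'\in\mathsf{pGCL}$: $C'\multimap\mathrm{trans}^{\succeq}_{\mathrm{awp}}[\![C]\!](f)$ implies $\mathrm{awp}[\![C]\!](f)=\mathrm{awp}[\![C']\!](f)$.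
   Context: States: fix a countably infinite set of program variables with values in $\mathbb{Q}_{\ge 0}$; a state is a map $\sigma$ from variables to $\mathbb{Q}_{\ge0}$ which is $0$ for all but finitely many variables; $\mathsf{States}$ is the set of states. A predicate is a map $\varphi:\mathsf{States}\to\{\mathsf{true},\mathsf{false}\}$; $\varphi\models\psi$ means every state satisfying $\varphi$ satisfies $\psi$; $\models\varphi$ means $\varphi$ holds in every state; $\varphi\Rightarrow\psi$ is the usual implication. Expectations: $\mathbb{E}$ is the set of maps $\mathsf{States}\to[0,\infty]$, ordered pointwise; $+,\cdot$ pointwise with $0\cdot\infty=0$; $\sqcap,\sqcup$ pointwise min/max; $[\varphi]$ Iverson bracket; $(\varphi\to g)(\sigma)=g(\sigma)$ if $\sigma\models\varphi$, else $\infty$; $f[x/E](\sigma)=f(\sigma[x\mapsto E(\sigma)])$. Programs of $\mathsf{pGCL}$: $C ::= \mathtt{skip} \mid x:=E \mid C;C \mid \mathtt{if}\ \varphi_1\to C\ \square\ \varphi_2\to C \mid \{C\}[p]\{C\} \mid \mathtt{while}(\varphi)\{C\}[I]$, where $E:\mathsf{States}\to\mathbb{Q}_{\ge0}$, $p:\mathsf{States}\to[0,1]$, in every guarded choice $\varphi_1\vee\varphi_2$ is valid, and every loop carries an invariant annotation $I\in\mathbb{E}$. Weakest preexpectations for $\mathcal{T}\in\{\mathrm{dwp},\mathrm{awp}\}$: $\mathcal{T}[\![\mathtt{skip}]\!](f)=f$; $\mathcal{T}[\![x:=E]\!](f)=f[x/E]$; $\mathcal{T}[\![C_1;C_2]\!](f)=\mathcal{T}[\![C_1]\!](\mathcal{T}[\![C_2]\!](f))$;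 $\mathrm{dwp}$ of a guarded choice: $(\varphi_1\to\mathrm{dwp}[\![C_1]\!](f))\sqcap(\varphi_2\to\mathrm{dwp}[\![C_2]\!](f))$; $\mathrm{awp}$ of a guarded choice: $[\varphi_1]\cdot\mathrm{awp}[\![C_1]\!](f)\sqcup[\varphi_2]\cdot\mathrm{awp}[\![C_2]\!](f)$; $\mathcal{T}[\![\{C_1\}[p]\{C_2\}]\!](f)=p\cdot\mathcal{T}[\![C_1]\!](f)+(1-p)\cdot\mathcal{T}[\![C_2]\!](f)$; loops: least fixpoint of $g\mapsto[\neg\varphi]\cdot f+[\varphi]\cdot\mathcal{T}[\![C']\!](g)$. The auxiliary transformer $\mathcal{T}^*$ follows the same rules except $\mathcal{T}^*[\![\mathtt{while}(\varphi)\{C'\}[I]]\!](f)=I$. Implementation relation $\multimap$: the smallest partial order on $\mathsf{pGCL}$ closed under: if $C_1'\multimap C_1$, $C_2'\multimap C_2$ then $C_1';C_2'\multimap C_1;C_2$ and $\{C_1'\}[p]\{C_2'\}\multimap\{C_1\}[p]\{C_2\}$; if moreover $\varphi_1'\models\varphi_1$, $\varphi_2'\models\varphi_2$, $\models\varphi_1'\vee\varphi_2'$ then $\mathtt{if}\ \varphi_1'\to C_1'\ \square\ \varphi_2'\to C_2'\multimap\mathtt{if}\ \varphi_1\to C_1\ \square\ \varphi_2\to C_2$; if $C'\multimap C$ then $\mathtt{while}(\varphi)\{C'\}\multimap\mathtt{while}(\varphi)\{C\}$. Verification conditions: a verification condition provider is a map $\mathfrak{C}$ assigning to each annotated loop and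 each $f\in\mathbb{E}$ a truth value. $\mathrm{vc}^{\mathfrak{C},\mathcal{T}}[\![C]\!](f)$ is defined inductively: $\mathsf{true}$ for $\mathtt{skip}$ and assignments; $\mathrm{vc}[\![C_1]\!](\mathcal{T}^*[\![C_2]\!](f))\wedge\mathrm{vc}[\![C_2]\!](f)$ for $C_1;C_2$; $\mathrm{vc}[\![C_1]\!](f)\wedge\mathrm{vc}[\![C_2]\!](f)$ for guarded and probabilistic choices; $\mathfrak{C}(\mathtt{while}(\varphi)\{C'\}[I],f)\wedge\mathrm{vc}[\![C']\!](I)$ for loops. $\mathfrak{C}$ yields upper (resp. lower) bounds for $\mathcal{T}$ if for all $C$, $f$, $\mathrm{vc}^{\mathfrak{C},\mathcal{T}}[\![C]\!](f)$ implies $\mathcal{T}[\![C]\!](f)\le\mathcal{T}^*[\![C]\!](f)$ (resp. $\ge$). Completeness: $\mathfrak{C}$ is demonically (resp. angelically) complete w.r.t. $(\Pi,\Xi)$ if (i) $\mathfrak{C}$ yields upper bounds for $\mathrm{dwp}$ (resp. lower bounds for $\mathrm{awp}$) and (ii) for all $C\in\Pi$, $f\in\Xi$, the loops of $C$ can be annotated with invariants such that $\mathrm{vc}^{\mathfrak{C},\mathrm{dwp}}[\![C]\!](f)$ holds and $\mathrm{dwp}[\![C]\!](f)=\mathrm{dwp}^*[\![C]\!](f)$ (resp. $\mathrm{vc}^{\mathfrak{C},\mathrm{awp}}[\![C]\!](f)$ holds and $\mathrm{awp}[\![C]\!](f)=\mathrm{awp}^*[\![C]\!](f)$). Comparison predicates: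 $f\preceq g$ true at $\sigma$ iff $f(\sigma)\le g(\sigma)$; $f\succeq g$ true at $\sigma$ iff $f(\sigma)\ge g(\sigma)$. Transformer $\mathrm{trans}^{\bowtie}_{\mathcal{T}}$: $\mathtt{skip}$ and assignments unchanged; $C_1;C_2\mapsto \mathrm{trans}^{\bowtie}_{\mathcal{T}}[\![C_1]\!](\mathcal{T}^*[\![C_2]\!](f));\mathrm{trans}^{\bowtie}_{\mathcal{T}}[\![C_2]\!](f)$; guarded choice $\mapsto \mathtt{if}\ \psi_1\to\mathrm{trans}^{\bowtie}_{\mathcal{T}}[\![C_1]\!](f)\ \square\ \psi_2\to\mathrm{trans}^{\bowtie}_{\mathcal{T}}[\![C_2]\!](f)$ with $\psi_1=\varphi_1\wedge(\varphi_2\Rightarrow \mathcal{T}^*[\![C_1]\!](f)\bowtie\mathcal{T}^*[\![C_2]\!](f))$, $\psi_2=\varphi_2\wedge(\varphi_1\Rightarrow \mathcal{T}^*[\![C_2]\!](f)\bowtie\mathcal{T}^*[\![C_1]\!](f))$; probabilistic choice transformed branchwise with the same $f$; $\mathtt{while}(\varphi)\{C'\}[I]\mapsto\mathtt{while}(\varphi)\{\mathrm{trans}^{\bowtie}_{\mathcal{T}}[\![C']\!](I)\}[I]$. Preservation: $\mathrm{trans}^{\preceq}_{\mathrm{dwp}}$ preserves $\mathfrak{C}$ if for all $C,C'$, $f$: $\mathrm{vc}^{\mathfrak{C},\mathrm{dwp}}[\![C]\!](f)$ and $C'\multimap\mathrm{trans}^{\preceq}_{\mathrm{dwp}}[\![C]\!](f)$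 imply $\mathrm{vc}^{\mathfrak{C},\mathrm{dwp}}[\![C']\!](f)$; analogously for $\mathrm{trans}^{\succeq}_{\mathrm{awp}}$ with $\mathrm{awp}$. *)

From HB Require Import structures.
From mathcomp Require Import all_boot all_order all_algebra.
From Stdlib Require Import Rdefinitions.
From mathcomp Require Import boolp classical_sets reals constructive_ereal ereal Rstruct.

Set Implicit Arguments.
Unset Strict Implicit.
Unset Printing Implicit Defensive.

Import Order.TTheory GRing.Theory Num.Theory.
Local Open Scope ring_scope.

Definition qnn := {q : rat | 0 <= q}.
Definition qnn0 : qnn := exist _ 0 (lexx 0).

Definition state :=
  {s : nat -> qnn | exists n : nat, forall x : nat, leq n x -> s x = qnn0}.

Lemma upd_fin (s : state) (x : nat) (v : qnn) :
  exists n : nat, forall y : nat, leq n y ->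
    (if y == x then v else proj1_sig s y) = qnn0.
Proof.
case: (proj2_sig s) => n Hn; exists (maxn n x.+1) => y Hy.
have Hxy : (y == x) = false.
  by apply/negbTE; apply/eqP => Exy; move: Hy; rewrite Exy geq_max ltnn andbF.
rewrite Hxy; apply: Hn; exact: leq_trans (leq_maxl n x.+1) Hy.
Qed.

Definition upd (s : state) (x : nat) (v : qnn) : state :=
  exist _ (fun y => if y == x then v else proj1_sig s y) (upd_fin s x v).

Definition pred_st := state -> bool.

Definition entails (phi psi : pred_st) : Prop := forall s, phi s -> psi s.
Definition valid (phi : pred_st) : Prop := forall s, phi s.

Definition aexp := state -> qnn.

Definition prob := {r : R | (0 <= r) && (r <= 1)}.
Definition pexp := state -> prob.

Local Open Scope ereal_scope.

Definition ennr := {x : \bar R | 0 <= x}.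

Definition ev (x : ennr) : \bar R := proj1_sig x.

Definition ennr_le (x y : ennr) : bool := ev x <= ev y.

Definition ennr0 : ennr := exist _ 0 (lexx 0).
Definition ennr1 : ennr := exist _ 1 lee01.
Definition ennr_inf : ennr := exist _ +oo (leey 0).

Definition ennr_add (x y : ennr) : ennr :=
  exist _ (ev x + ev y) (adde_ge0 (proj2_sig x) (proj2_sig y)).

(* multiplication with 0 * oo = 0 (convention of mathcomp's mule) *)
Definition ennr_mul (x y : ennr) : ennr :=
  exist _ (ev x * ev y) (mule_ge0 (proj2_sig x) (proj2_sig y)).

Lemma min_ge0 (x y : ennr) : 0 <= Order.min (ev x) (ev y).
Proof. by rewrite le_min (proj2_sig x) (proj2_sig y). Qed.
Lemma max_ge0 (x y : ennr) : 0 <= Order.max (ev x) (ev y).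
Proof. by rewrite le_max (proj2_sig x). Qed.

Definition ennr_min (x y : ennr) : ennr := exist (fun z : \bar R => 0 <= z) _ (min_ge0 x y).
Definition ennr_max (x y : ennr) : ennr := exist (fun z : \bar R => 0 <= z) _ (max_ge0 x y).

Lemma prob_ge0 (p : prob) : 0 <= (proj1_sig p)%:E.
Proof. by rewrite lee_fin; move: (proj2_sig p) => /ssrbool.andP []. Qed.
Lemma probc_ge0 (p : prob) : 0 <= (1 - proj1_sig p)%:E.
Proof. by rewrite lee_fin subr_ge0; move: (proj2_sig p) => /ssrbool.andP []. Qed.
Definition ennr_of_prob (p : prob) : ennr := exist (fun z : \bar R => 0 <= z) _ (prob_ge0 p).
Definition ennr_of_probc (p : prob) : ennr := exist (fun z : \bar R => 0 <= z) _ (probc_ge0 p).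

Lemma inf_ge0 (S : set ennr) : 0 <= ereal_inf [set ev x | x in S].
Proof. by apply: le_ereal_inf_tmp => _ [x _ <-]; exact: (proj2_sig x). Qed.
Definition ennr_infimum (S : set ennr) : ennr := exist (fun z : \bar R => 0 <= z) _ (inf_ge0 S).

Definition expect := state -> ennr.

Definition exp_le (f g : expect) : Prop := forall s, ennr_le (f s) (g s).

Definition iverson (phi : pred_st) : expect :=
  fun s => if phi s then ennr1 else ennr0.

Definition guard_exp (phi : pred_st) (g : expect) : expect :=
  fun s => if phi s then g s else ennr_inf.

Definition subst (f : expect) (x : nat) (E : aexp) : expect :=
  fun s => f (upd s x (E s)).

(* least fixpoint of a (monotone) transformer on expectations,
   given by the Knaster--Tarski formula: pointwise infimum of all
   prefixed points *)
Definition lfp (Phi : expect -> expect) : expect :=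
  fun s => ennr_infimum [set g s | g in [set g | exp_le (Phi g) g]].

Close Scope ereal_scope.

Inductive pgcl : Type :=
| Skip : pgcl
| Assign : nat -> aexp -> pgcl
| Seq : pgcl -> pgcl -> pgcl
| If : pred_st -> pgcl -> pred_st -> pgcl -> pgcl
| Prob : pgcl -> pexp -> pgcl -> pgcl
| While : pred_st -> pgcl -> expect -> pgcl.           (* while(phi){C}[I] *)

(* membership in pGCL: in every guarded choice phi1 \/ phi2 is valid *)
Fixpoint wf (C : pgcl) : Prop :=
  match C with
  | Skip | Assign _ _ => True
  | Seq C1 C2 => wf C1 /\ wf C2
  | If phi1 C1 phi2 C2 => valid (fun s => phi1 s || phi2 s) /\ wf C1 /\ wf C2
  | Prob C1 _ C2 => wf C1 /\ wf C2
  | While _ C' _ => wf C'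
  end.

Fixpoint reannot (C D : pgcl) : Prop :=
  match C, D with
  | Skip, Skip => True
  | Assign x E, Assign y E' => x = y /\ E = E'
  | Seq C1 C2, Seq D1 D2 => reannot C1 D1 /\ reannot C2 D2
  | If p1 C1 p2 C2, If q1 D1 q2 D2 =>
      p1 = q1 /\ p2 = q2 /\ reannot C1 D1 /\ reannot C2 D2
  | Prob C1 p C2, Prob D1 q D2 => p = q /\ reannot C1 D1 /\ reannot C2 D2
  | While phi C' _, While psi D' _ => phi = psi /\ reannot C' D'
  | _, _ => False
  end.

Inductive tmode := Dwp | Awp.

(* wpT T false = T (dwp or awp);  wpT T true = T^* (loops yield their invariant) *)
Fixpoint wpT (T : tmode) (star : bool) (C : pgcl) (f : expect) : expect :=
  match C with
  | Skip => f
  | Assign x E => subst f x E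
  | Seq C1 C2 => wpT T star C1 (wpT T star C2 f)
  | If phi1 C1 phi2 C2 =>
      match T with
      | Dwp => fun s => ennr_min (guard_exp phi1 (wpT T star C1 f) s)
                                 (guard_exp phi2 (wpT T star C2 f) s)
      | Awp => fun s => ennr_max (ennr_mul (iverson phi1 s) (wpT T star C1 f s))
                                 (ennr_mul (iverson phi2 s) (wpT T star C2 f s))
      end
  | Prob C1 p C2 =>
      fun s => ennr_add (ennr_mul (ennr_of_prob (p s)) (wpT T star C1 f s))
                        (ennr_mul (ennr_of_probc (p s)) (wpT T star C2 f s))
  | While phi C' Inv =>
      if star then Inv
      else lfp (fun g s =>
             ennr_add (ennr_mul (iverson (fun t => ~~ phi t) s) (f s))
                      (ennr_mul (iverson phi s) (wpT T star C' g s)))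
  end.

Definition dwp := wpT Dwp false.
Definition dwp_star := wpT Dwp true.
Definition awp := wpT Awp false.
Definition awp_star := wpT Awp true.

Inductive impl : pgcl -> pgcl -> Prop :=
| impl_refl C : impl C C
| impl_trans C1 C2 C3 : impl C1 C2 -> impl C2 C3 -> impl C1 C3
| impl_seq C1' C1 C2' C2 :
    impl C1' C1 -> impl C2' C2 -> impl (Seq C1' C2') (Seq C1 C2)
| impl_prob C1' C1 C2' C2 p :
    impl C1' C1 -> impl C2' C2 -> impl (Prob C1' p C2') (Prob C1 p C2)
| impl_if C1' C1 C2' C2 phi1' phi1 phi2' phi2 :
    impl C1' C1 -> impl C2' C2 ->
    entails phi1' phi1 -> entails phi2' phi2 ->
    valid (fun s => phi1' s || phi2' s) ->
    impl (If phi1' C1' phi2' C2') (If phi1 C1 phi2 C2)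
| impl_while phi C' C Inv :
    impl C' C -> impl (While phi C' Inv) (While phi C Inv).

(* a VC provider assigns a truth value to each annotated loop
   while(phi){C'}[I] and each expectation f *)
Definition vcprovider := pred_st -> pgcl -> expect -> expect -> Prop.

Fixpoint vc (P : vcprovider) (T : tmode) (C : pgcl) (f : expect) : Prop :=
  match C with
  | Skip | Assign _ _ => True
  | Seq C1 C2 => vc P T C1 (wpT T true C2 f) /\ vc P T C2 f
  | If _ C1 _ C2 => vc P T C1 f /\ vc P T C2 f
  | Prob C1 _ C2 => vc P T C1 f /\ vc P T C2 f
  | While phi C' Inv => P phi C' Inv f /\ vc P T C' Inv
  end.

Definition upper_bounds_dwp (P : vcprovider) : Prop :=
  forall C f, wf C -> vc P Dwp C f -> exp_le (dwp C f) (dwp_star C f).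

Definition lower_bounds_awp (P : vcprovider) : Prop :=
  forall C f, wf C -> vc P Awp C f -> exp_le (awp_star C f) (awp C f).

Definition demonically_complete (P : vcprovider)
    (Pi : pgcl -> Prop) (Xi : expect -> Prop) : Prop :=
  upper_bounds_dwp P /\
  forall C f, Pi C -> Xi f ->
    exists D, reannot C D /\ vc P Dwp D f /\ dwp D f = dwp_star D f.

Definition angelically_complete (P : vcprovider)
    (Pi : pgcl -> Prop) (Xi : expect -> Prop) : Prop :=
  lower_bounds_awp P /\
  forall C f, Pi C -> Xi f ->
    exists D, reannot C D /\ vc P Awp D f /\ awp D f = awp_star D f.

Definition cmp_preceq (f g : expect) : pred_st := fun s => ennr_le (f s) (g s).
Definition cmp_succeq (f g : expect) : pred_st := fun s => ennr_le (g s) (f s).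

Fixpoint trans (T : tmode) (cmp : expect -> expect -> pred_st)
    (C : pgcl) (f : expect) : pgcl :=
  match C with
  | Skip => Skip
  | Assign x E => Assign x E
  | Seq C1 C2 => Seq (trans T cmp C1 (wpT T true C2 f)) (trans T cmp C2 f)
  | If phi1 C1 phi2 C2 =>
      let psi1 := fun s => phi1 s && (phi2 s ==> cmp (wpT T true C1 f) (wpT T true C2 f) s) in
      let psi2 := fun s => phi2 s && (phi1 s ==> cmp (wpT T true C2 f) (wpT T true C1 f) s) in
      If psi1 (trans T cmp C1 f) psi2 (trans T cmp C2 f)
  | Prob C1 p C2 => Prob (trans T cmp C1 f) p (trans T cmp C2 f)
  | While phi C' Inv => While phi (trans T cmp C' Inv) Inv
  end.

Definition trans_dwp := trans Dwp cmp_preceq.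
Definition trans_awp := trans Awp cmp_succeq.

Definition preserves_dwp (P : vcprovider) : Prop :=
  forall C C' f, wf C -> wf C' ->
    vc P Dwp C f -> impl C' (trans_dwp C f) -> vc P Dwp C' f.

Definition preserves_awp (P : vcprovider) : Prop :=
  forall C C' f, wf C -> wf C' ->
    vc P Awp C f -> impl C' (trans_awp C f) -> vc P Awp C' f.

From mathcomp Require Import all_boot all_order all_algebra.
From mathcomp Require Import boolp classical_sets constructive_ereal ereal Rstruct.

(* Let D be an exact annotation of C for f (dwp D f = dwp^* D f, as demonic
   completeness provides) and let C' implement trans D f.  Refinement only
   removes demonic choices, so dwp D f <= dwp C' f.  Conversely, C' inherits
   the verification conditions of D, hence dwp C' f <= dwp^* C' f; and since
   the guards of trans D f only let a branch with the smaller dwp^* through,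
   dwp^* C' f <= dwp^* D f = dwp D f.  The angelic case is the order dual. *)

Set Implicit Arguments.
Unset Strict Implicit.
Unset Printing Implicit Defensive.
Import Order.TTheory GRing.Theory Num.Theory.
Local Open Scope ereal_scope.

Lemma ev_ge0 (x : ennr) : 0 <= ev x.
Proof. exact: (proj2_sig x). Qed.

Lemma exp_le_refl f : exp_le f f.
Proof. by move=> s; exact: lexx. Qed.

Lemma exp_le_trans f g h : exp_le f g -> exp_le g h -> exp_le f h.
Proof. by move=> fg gh s; exact: le_trans (fg s) (gh s). Qed.

Lemma exp_le_anti f g : exp_le f g -> exp_le g f -> f = g.
Proof.
move=> fg gf; apply: funext => s; apply: val_inj; apply: le_anti.
by apply/andP; split; [exact: fg | exact: gf].
Qed.

Lemma ennr_add_le a b c d : ennr_le a b -> ennr_le c d ->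
  ennr_le (ennr_add a c) (ennr_add b d).
Proof. exact: leeD. Qed.

Lemma ennr_mul_le a b c d : ennr_le a b -> ennr_le c d ->
  ennr_le (ennr_mul a c) (ennr_mul b d).
Proof. by move=> ab cd; apply: lee_pmul => //; exact: ev_ge0. Qed.

Lemma ennr_min_le a b c d : ennr_le a b -> ennr_le c d ->
  ennr_le (ennr_min a c) (ennr_min b d).
Proof. by rewrite /ennr_le => ab cd; rewrite le_min !ge_min ab cd orbT. Qed.

Lemma ennr_max_le a b c d : ennr_le a b -> ennr_le c d ->
  ennr_le (ennr_max a c) (ennr_max b d).
Proof. by rewrite /ennr_le => ab cd; rewrite ge_max !le_max ab cd orbT. Qed.

Lemma guard_exp_le (p q : pred_st) g h s : entails q p -> exp_le g h ->
  ennr_le (guard_exp p g s) (guard_exp q h s).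
Proof.
rewrite /guard_exp => qp gh; case qs: (q s); first by rewrite (qp _ qs); exact: gh.
exact: leey.
Qed.

Lemma iverson_mul_le (p q : pred_st) g h s : entails q p -> exp_le g h ->
  ennr_le (ennr_mul (iverson q s) (g s)) (ennr_mul (iverson p s) (h s)).
Proof.
rewrite /iverson => qp gh; case qs: (q s).
  by rewrite (qp _ qs); apply: ennr_mul_le (lexx _) (gh s).
by rewrite /ennr_le /= mul0e; apply: mule_ge0; exact: ev_ge0.
Qed.

Lemma lfp_le (Phi Psi : expect -> expect) :
  (forall g, exp_le (Phi g) (Psi g)) -> exp_le (lfp Phi) (lfp Psi).
Proof.
move=> PhiPsi s; apply: ereal_inf_le_tmp => _ [_ [g Psig <-] <-].
by exists (g s) => //; exists g => //; exact: exp_le_trans (PhiPsi g) Psig.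
Qed.

Definition prob_mix (p : pexp) (g h : expect) : expect :=
  fun s => ennr_add (ennr_mul (ennr_of_prob (p s)) (g s))
                    (ennr_mul (ennr_of_probc (p s)) (h s)).

Lemma prob_mix_le p g1 g2 h1 h2 : exp_le g1 h1 -> exp_le g2 h2 ->
  exp_le (prob_mix p g1 g2) (prob_mix p h1 h2).
Proof.
move=> gh1 gh2 s; apply: ennr_add_le; apply: ennr_mul_le (lexx _) _.
  exact: gh1.
exact: gh2.
Qed.

Lemma wpT_le T star C f g : exp_le f g -> exp_le (wpT T star C f) (wpT T star C g).
Proof.
elim: C f g => [|x E|C1 IH1 C2 IH2|p1 C1 IH1 p2 C2 IH2|C1 IH1 p C2 IH2|phi C _ I] f g fg //=.
- by move=> s; exact: fg.
- exact/IH1/IH2.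
- case: T IH1 IH2 => IH1 IH2 s.
  + by apply: ennr_min_le; apply: guard_exp_le => //; [exact: IH1 | exact: IH2].
  + by apply: ennr_max_le; apply: iverson_mul_le => //; [exact: IH1 | exact: IH2].
- by apply: prob_mix_le; [exact: IH1 | exact: IH2].
- case: star; first exact: exp_le_refl.
  apply: lfp_le => h s; apply: ennr_add_le (lexx _).
  exact: ennr_mul_le (lexx _) (fg s).
Qed.

(* Refinement removes choices, so it can only increase dwp and decrease awp. *)
Definition exp_le_mode (T : tmode) (f g : expect) : Prop :=
  if T is Dwp then exp_le f g else exp_le g f.

Definition cmp_mode (T : tmode) : expect -> expect -> pred_st :=
  if T is Dwp then cmp_preceq else cmp_succeq.

Lemma exp_le_mode_refl T f : exp_le_mode T f f.
Proof. by case: T; exact: exp_le_refl. Qed.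

Lemma exp_le_mode_trans T f g h :
  exp_le_mode T f g -> exp_le_mode T g h -> exp_le_mode T f h.
Proof. by case: T => fg gh; [exact: exp_le_trans fg gh | exact: exp_le_trans gh fg]. Qed.

Lemma exp_le_mode_anti T f g : exp_le_mode T f g -> exp_le_mode T g f -> f = g.
Proof. by case: T => fg gf; exact: exp_le_anti. Qed.

Lemma prob_mix_le_mode T p g1 g2 h1 h2 :
  exp_le_mode T g1 h1 -> exp_le_mode T g2 h2 ->
  exp_le_mode T (prob_mix p g1 g2) (prob_mix p h1 h2).
Proof. by case: T; exact: prob_mix_le. Qed.

Lemma wpT_le_mode T star C f g :
  exp_le_mode T f g -> exp_le_mode T (wpT T star C f) (wpT T star C g).
Proof. by case: T; exact: wpT_le. Qed.

(* [impl] unfolded structurally, forgetting that refined guards must still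
   cover all states. *)
Fixpoint refines (C' C : pgcl) {struct C'} : Prop :=
  match C', C with
  | Skip, Skip => True
  | Assign x E, Assign y E' => x = y /\ E = E'
  | Seq C1' C2', Seq C1 C2 => refines C1' C1 /\ refines C2' C2
  | If q1 C1' q2 C2', If p1 C1 p2 C2 =>
      entails q1 p1 /\ entails q2 p2 /\ refines C1' C1 /\ refines C2' C2
  | Prob C1' p C2', Prob C1 q C2 => p = q /\ refines C1' C1 /\ refines C2' C2
  | While phi C' J, While psi C J' => phi = psi /\ J = J' /\ refines C' C
  | _, _ => False
  end.

Lemma refines_refl C : refines C C.
Proof. by elim: C => //= *; repeat split. Qed.

Lemma refines_trans A B C : refines A B -> refines B C -> refines A C.
Proof.
elim: A B C => [|x E|A1 IH1 A2 IH2|q1 A1 IH1 q2 A2 IH2|A1 IH1 p A2 IH2|phi A IH I]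
  [|y E'|B1 B2|r1 B1 r2 B2|B1 p' B2|phi' B I']
  [|z E''|C1 C2|s1 C1 s2 C2|C1 p'' C2|phi'' C I''] //=.
- by move=> [-> ->] [-> ->].
- by move=> [AB1 AB2] [BC1 BC2]; split; [exact: IH1 AB1 BC1 | exact: IH2 AB2 BC2].
- move=> [qr1 [qr2 [AB1 AB2]]] [rs1 [rs2 [BC1 BC2]]].
  by split; [|split; [|split]] => [s /qr1 /rs1 | s /qr2 /rs2 | | ] //;
    [exact: IH1 AB1 BC1 | exact: IH2 AB2 BC2].
- move=> [-> [AB1 AB2]] [-> [BC1 BC2]].
  by split; [|split; [exact: IH1 AB1 BC1 | exact: IH2 AB2 BC2]].
- by move=> [-> [-> AB]] [-> [-> BC]]; split; [|split; [|exact: IH AB BC]].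
Qed.

Lemma impl_refines C' C : impl C' C -> refines C' C.
Proof.
elim=> /= [D|D1 D2 D3 _ D12 _ D23|*|*|*|*]; try by repeat split.
- exact: refines_refl.
- exact: refines_trans D12 D23.
Qed.

Lemma trans_refines T cmp D f : refines (trans T cmp D f) D.
Proof.
elim: D f => [|x E|C1 IH1 C2 IH2|p1 C1 IH1 p2 C2 IH2|C1 IH1 p C2 IH2|phi C IH I] f //=.
by split; [|split] => // s /andP [].
Qed.

Lemma reannot_wf C D : reannot C D -> wf C -> wf D.
Proof.
elim: C D => [|x E|A1 IH1 A2 IH2|q1 A1 IH1 q2 A2 IH2|A1 IH1 p A2 IH2|phi A IH I]
  [|y E'|B1 B2|r1 B1 r2 B2|B1 p' B2|phi' B I'] //=.
- by move=> [AB1 AB2] [wf1 wf2]; split; [exact: IH1 | exact: IH2].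
- move=> [<- [<- [AB1 AB2]]] [q12 [wf1 wf2]].
  by split => //; split; [exact: IH1 | exact: IH2].
- by move=> [_ [AB1 AB2]] [wf1 wf2]; split; [exact: IH1 | exact: IH2].
- by move=> [_ AB]; exact: IH.
Qed.

Lemma dwp_if_select_le (q1 q2 p1 p2 : pred_st) (a a' b b' : expect) s :
  q1 s || q2 s ->
  (q1 s -> p1 s && (p2 s ==> ennr_le (a s) (b s))) ->
  (q2 s -> p2 s && (p1 s ==> ennr_le (b s) (a s))) ->
  ennr_le (a' s) (a s) -> ennr_le (b' s) (b s) ->
  ennr_le (ennr_min (guard_exp q1 a' s) (guard_exp q2 b' s))
          (ennr_min (guard_exp p1 a s) (guard_exp p2 b s)).
Proof.
rewrite /ennr_le /guard_exp /=.
case: (q1 s) => [_ /(_ isT) /andP [-> ab] _ a'a _ | /= q2s _ /(_ q2s) /andP [-> ba] _ b'b].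
- apply: le_trans (_ : _ <= ev (a s)) _; first by rewrite ge_min a'a.
  by rewrite le_min lexx; case: (p2 s) ab => // _; exact: leey.
- rewrite q2s; apply: le_trans (_ : _ <= ev (b s)) _; first by rewrite ge_min b'b orbT.
  by rewrite le_min lexx andbT; case: (p1 s) ba => // _; exact: leey.
Qed.

Lemma awp_if_select_le (q1 q2 p1 p2 : pred_st) (a a' b b' : expect) s :
  q1 s || q2 s ->
  (q1 s -> p1 s && (p2 s ==> ennr_le (b s) (a s))) ->
  (q2 s -> p2 s && (p1 s ==> ennr_le (a s) (b s))) ->
  ennr_le (a s) (a' s) -> ennr_le (b s) (b' s) ->
  ennr_le (ennr_max (ennr_mul (iverson p1 s) (a s)) (ennr_mul (iverson p2 s) (b s)))
          (ennr_max (ennr_mul (iverson q1 s) (a' s)) (ennr_mul (iverson q2 s) (b' s))).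
Proof.
rewrite /ennr_le /iverson /=.
case: (q1 s) => [_ /(_ isT) /andP [-> ba] _ aa' _ | /= q2s _ /(_ q2s) /andP [-> ab] _ bb'].
- apply: le_trans (_ : ev (a s) <= _); last by rewrite le_max mul1e aa'.
  rewrite ge_max mul1e lexx; case: (p2 s) ba => /= [|_]; first by rewrite mul1e.
  by rewrite mul0e; exact: ev_ge0.
- rewrite q2s; apply: le_trans (_ : ev (b s) <= _); last by rewrite le_max mul1e bb' orbT.
  rewrite ge_max mul1e lexx andbT; case: (p1 s) ab => /= [|_]; first by rewrite mul1e.
  by rewrite mul0e; exact: ev_ge0.
Qed.

Lemma wpT_refines T star C C' f :
  refines C' C -> exp_le_mode T (wpT T star C f) (wpT T star C' f).
Proof.
elim: C C' f => [|x E|A1 IH1 A2 IH2|p1 A1 IH1 p2 A2 IH2|A1 IH1 p A2 IH2|phi A IH J]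
  [|y E'|B1 B2|q1 B1 q2 B2|B1 p' B2|phi' B J'] f //=.
- by move=> _; exact: exp_le_mode_refl.
- by move=> [<- <-]; exact: exp_le_mode_refl.
- move=> [AB1 AB2]; apply: exp_le_mode_trans (IH1 _ _ AB1) _.
  exact/wpT_le_mode/IH2.
- move=> [qp1 [qp2 [AB1 AB2]]].
  case: T {IH1 IH2}(IH1 _ f AB1) (IH2 _ f AB2) => le1 le2 s.
  + by apply: ennr_min_le; exact: guard_exp_le.
  + by apply: ennr_max_le; exact: iverson_mul_le.
- by move=> [<- [AB1 AB2]]; apply: prob_mix_le_mode; [exact: IH1 | exact: IH2].
- move=> [<- [<- AB]]; case: star IH => IH; first exact: exp_le_mode_refl.
  case: T {IH}(fun g => IH _ g AB) => leA; apply: lfp_le => g s;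
    apply: ennr_add_le (lexx _) _; exact: ennr_mul_le (lexx _) (leA g s).
Qed.

(* The guards of [trans] admit only a branch whose T^* value is optimal for T,
   so any refinement of it has a T^* value at least as good as [D]'s. *)
Lemma wpT_star_trans T D C' f :
  wf C' -> refines C' (trans T (cmp_mode T) D f) ->
  exp_le_mode T (wpT T true C' f) (wpT T true D f).
Proof.
elim: D C' f => [|x E|A1 IH1 A2 IH2|p1 A1 IH1 p2 A2 IH2|A1 IH1 p A2 IH2|phi A _ J]
  [|y E'|B1 B2|q1 B1 q2 B2|B1 p' B2|phi' B J'] f //=.
- by move=> _ _; exact: exp_le_mode_refl.
- by move=> _ [-> ->]; exact: exp_le_mode_refl.
- move=> [wf1 wf2] [BA1 BA2].
  exact: exp_le_mode_trans (wpT_le_mode _ _ (IH2 _ _ wf2 BA2)) (IH1 _ _ wf1 BA1).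
- move=> [q12 [wf1 wf2]] [qp1 [qp2 [BA1 BA2]]].
  case: T qp1 qp2 {IH1 IH2 BA1 BA2}(IH1 _ f wf1 BA1) (IH2 _ f wf2 BA2)
    => qp1 qp2 le1 le2 s.
  + exact: dwp_if_select_le (q12 s) (qp1 s) (qp2 s) (le1 s) (le2 s).
  + exact: awp_if_select_le (q12 s) (qp1 s) (qp2 s) (le1 s) (le2 s).
- by move=> [wf1 wf2] [<- [BA1 BA2]]; apply: prob_mix_le_mode; [exact: IH1 | exact: IH2].
- by move=> _ [_ [-> _]]; exact: exp_le_mode_refl.
Qed.

Lemma wpT_trans_exact T D C' f :
  wf C' -> impl C' (trans T (cmp_mode T) D f) ->
  wpT T false D f = wpT T true D f ->
  exp_le_mode T (wpT T false C' f) (wpT T true C' f) ->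
  wpT T false D f = wpT T false C' f.
Proof.
move=> wfC' /impl_refines C'D D_exact C'_bound.
have C'_refines_D := refines_trans C'D (trans_refines T (cmp_mode T) D f).
apply: exp_le_mode_anti (wpT_refines T false f C'_refines_D) _.
rewrite D_exact; exact: exp_le_mode_trans C'_bound (wpT_star_trans wfC' C'D).
Qed.

Theorem theorem6p7 (Pi : pgcl -> Prop) (Xi : expect -> Prop) (P : vcprovider) :
  (forall C, Pi C -> wf C) ->
  (demonically_complete P Pi Xi -> preserves_dwp P ->
     forall C f, Pi C -> Xi f ->
       exists D, reannot C D /\
         forall C', wf C' -> impl C' (trans_dwp D f) -> dwp D f = dwp C' f)
  /\
  (angelically_complete P Pi Xi -> preserves_awp P ->
     forall C f, Pi C -> Xi f ->
       exists D, reannot C D /\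
         forall C', wf C' -> impl C' (trans_awp D f) -> awp D f = awp C' f).
Proof.
move=> wf_Pi; split=> -[bounds complete] preserves C f PiC Xif;
  have [D [CD [vcD D_exact]]] := complete C f PiC Xif;
  exists D; split=> [// | C' wfC' implC'];
  apply: (wpT_trans_exact wfC' implC' D_exact);
  apply: (bounds _ _ wfC');
  exact: preserves (reannot_wf CD (wf_Pi C PiC)) wfC' vcD implC'.
Qed.
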